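(* Let $(W,S)$ be a Coxeter system with $S$ finite, $\Gamma$ a totally ordered abelian group, $\varphi:W\to\Gamma$ a weight function, $p$ a prime and $G$ a finite $p$-group of automorphisms of $W$ with $\sigma(S)=S$ and $\varphi\circ\sigma=\varphi$ for all $\sigma\in G$. If $h\in\mathcal{H}_G$ and $h'\in\mathcal{H}^G$ satisfy $\mathrm{can}_G(h)=\mathrm{br}_G(h')$, then $\tau_G(h)\equiv\tau(h')\bmod pA$.
   Context: A weight function satisfies $\varphi(ww')=\varphi(w)+\varphi(w')$ whenever $\ell(ww')=\ell(w)+\ell(w')$. $A=\mathbb{Z}[\Gamma]$. $\mathcal{H}=\mathcal{H}(W,S,\Gamma,\varphi)$ is the Hecke algebra over $A$: free $A$-module with basis $(T_w)_{w\in W}$, with $T_wT_{w'}=T_{ww'}$ if $\ell(ww')=\ell(w)+\ell(w')$ and $(T_s-e^{\varphi(s)})(T_s+e^{-\varphi(s)})=0$ for $s\in S$; $G$ acts on it by $\sigma(T_w)=T_{\sigma(w)}$. $\tau:\mathcal{H}\to A$ is the $A$-linear map with $\tau(T_1)=1$ and $\tau(T_w)=0$ for $w\neq1$. For each $G$-orbit $\omega\subseteq S$ with $W_\omega=\langle\omega\rangle$ finite, $s_\omega$ is the longest element of $W_\omega$; $S_G$ is the set of these. $(W^G,S_G)$ is a Coxeter system and $\varphi_G=\varphi|_{W^G}$ a weight function on it; $\mathcal{H}_G=\mathcal{H}(W^G,S_G,\Gamma,\varphi_G)$ with basis $(T^G_w)_{w\in W^G}$ and $\tau_G$ defined analogously.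 Brauer quotient: $\mathrm{Br}_G(\mathcal{H})=\mathcal{H}^G/\sum_{H<G}\mathrm{Tr}_H^G(\mathcal{H}^H)$ (proper subgroups, $\mathrm{Tr}_H^G(m)=\sum_{\sigma\in[G/H]}\sigma(m)$), with canonical map $\mathrm{br}_G$. $\mathrm{can}_G:\mathcal{H}_G\to\mathrm{Br}_G(\mathcal{H})$ is the $A$-linear map with $\mathrm{can}_G(T^G_w)=\mathrm{br}_G(T_w)$ for $w\in W^G$. *)

From HB Require Import structures.
From mathcomp Require Import all_boot all_order all_algebra all_fingroup all_solvable.
From mathcomp Require Import finmap.
From mathcomp Require Import monalg.
From Stdlib Require Import ClassicalEpsilon.

Set Implicit Arguments.
Unset Strict Implicit.
Unset Printing Implicit Defensive.

Import GRing.Theory.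
Local Open Scope fset_scope.
Local Open Scope ring_scope.

Definition grpring (Gam : zmodType) : Type := {malg int[Gam]}.
HB.instance Definition _ (Gam : zmodType) := GRing.Zmodule.on (grpring Gam).

Section GroupRing.
Context (Gam : zmodType).
Implicit Types (g : grpring Gam) (k : Gam).

Definition grone : grpring Gam := << (0 : Gam) >>.
Definition grmul g1 g2 : grpring Gam :=
  \sum_(k1 <- msupp g1) \sum_(k2 <- msupp g2) << g1@_k1 * g2@_k2 *g (k1 + k2) >>.

Lemma grmullw (d1 d2 : {fset Gam}) g1 g2 :
  msupp g1 `<=` d1 -> msupp g2 `<=` d2 ->
  grmul g1 g2 = \sum_(k1 <- d1) \sum_(k2 <- d2) << g1@_k1 * g2@_k2 *g (k1 + k2) >>.
Proof.
move=> le_d1 le_d2; rewrite /grmul (big_fset_incl _ le_d1) /=.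
  apply/eq_bigr=> k1 _; apply/big_fset_incl => // k _ /mcoeff_outdom ->.
  by rewrite mulr0 monalgU0.
move=> k _ /mcoeff_outdom g1k.
by rewrite big1 => // k' _; rewrite g1k mul0r monalgU0.
Qed.

Lemma grmul0g g : grmul 0 g = 0.
Proof. by rewrite /grmul msupp0 big_seq_fset0. Qed.
Lemma grmulg0 g : grmul g 0 = 0.
Proof. by rewrite /grmul msupp0 big1 // => k _; rewrite big_seq_fset0. Qed.

Lemma grmulUg c k g :
  grmul << c *g k >> g = \sum_(k' <- msupp g) << c * g@_k' *g k + k' >>.
Proof.
rewrite (grmullw msuppU_le (fsubset_refl _)) big_seq_fset1.
by apply/eq_bigr => k' _; rewrite mcoeffUU.
Qed.

Lemma grmulgU c k g :
  grmul g << c *g k >> = \sum_(k' <- msupp g) << g@_k' * c *g k' + k >>.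
Proof.
rewrite (grmullw (fsubset_refl _) msuppU_le); apply/eq_bigr=> k' _.
by rewrite big_seq_fset1 mcoeffUU.
Qed.

Lemma grmulUU c1 c2 k1 k2 :
  grmul << c1 *g k1 >> << c2 *g k2 >> = << c1 * c2 *g k1 + k2 >>.
Proof. by rewrite (grmullw msuppU_le msuppU_le) !big_seq_fset1 !mcoeffUU. Qed.

Lemma grmulC g1 g2 : grmul g1 g2 = grmul g2 g1.
Proof.
rewrite /grmul exchange_big /=; apply/eq_bigr=> k1 _; apply/eq_bigr=> k2 _.
by rewrite mulrC addrC.
Qed.

Lemma grmul1g g : grmul grone g = g.
Proof.
rewrite grmulUg [RHS]monalgE.
by apply/eq_bigr=> kg _; rewrite mul1r add0r.
Qed.

Lemma grmulgDl g1 g2 g : grmul (g1 + g2) g = grmul g1 g + grmul g2 g.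
Proof.
rewrite [in RHS](grmullw (fsubsetUl _ (msupp g2)) (fsubset_refl _)).
rewrite [in RHS](grmullw (fsubsetUr (msupp g1) _) (fsubset_refl _)).
rewrite (grmullw (msuppD_le _ _) (fsubset_refl _)).
rewrite -big_split /=; apply/eq_bigr=> k1 _.
rewrite -big_split /=; apply/eq_bigr=> k2 _.
by rewrite mcoeffD mulrDl monalgUD.
Qed.

Lemma grmulgDr g g1 g2 : grmul g (g1 + g2) = grmul g g1 + grmul g g2.
Proof. by rewrite !(grmulC g) grmulgDl. Qed.

Lemma grmulEl1 g1 g2 :
  grmul g1 g2 = \sum_(k1 <- msupp g1) grmul << g1@_k1 *g k1 >> g2.
Proof. by apply/eq_bigr=> k _; rewrite grmulUg. Qed.

Lemma grmulEr1 g1 g2 :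
  grmul g1 g2 = \sum_(k2 <- msupp g2) grmul g1 << g2@_k2 *g k2 >>.
Proof.
by rewrite grmulC grmulEl1; apply/eq_bigr=> k _; rewrite grmulC.
Qed.

Lemma grmulA g1 g2 g3 : grmul g1 (grmul g2 g3) = grmul (grmul g1 g2) g3.
Proof.
rewrite [RHS](big_morph (grmul^~ _) (fun _ _ => grmulgDl _ _ _) (grmul0g _)).
rewrite grmulEl1; apply/eq_bigr=> k1 _.
rewrite [LHS](big_morph (grmul _) (fun _ _ => grmulgDr _ _ _) (grmulg0 _)).
rewrite [RHS](big_morph (grmul^~ _) (fun _ _ => grmulgDl _ _ _) (grmul0g _)).
apply/eq_bigr=> k2 _.
rewrite [LHS](big_morph (grmul _) (fun _ _ => grmulgDr _ _ _) (grmulg0 _)).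
by rewrite grmulEr1; apply/eq_bigr=> k3 _; rewrite !grmulUU mulrA addrA.
Qed.

Lemma grone_neq0 : grone != 0.
Proof. by apply/eqP/malgP=> /(_ 0) /eqP; rewrite mcoeffUU mcoeff0 oner_eq0. Qed.

HB.instance Definition _ := GRing.Zmodule_isComNzRing.Build (grpring Gam)
  grmulA grmulC grmul1g grmulgDl grone_neq0.

End GroupRing.


Section Coxeter.
Context (W : groupType).
Implicit Types (S : {fset W}) (w : W) (ws : seq W).

Definition wprod ws : W := foldr (fun x y => (x * y)%g) 1%g ws.

Definition is_word S w ws : bool := all (fun s => s \in S) ws && (wprod ws == w).

Definition has_length S w (n : nat) : Prop :=
  (exists ws, is_word S w ws /\ size ws = n) /\
  (forall ws, is_word S w ws -> (n <= size ws)%N).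

Definition cox_length S w : nat := epsilon (inhabits 0%N) (has_length S w).

Definition cox_order (s t : W) (n : nat) : Prop :=
  (0 < n)%N /\ ((s * t) ^+ n)%g = 1%g /\
  (forall k, (0 < k < n)%N -> ((s * t) ^+ k)%g != 1%g).

(* (W,S) is a Coxeter system: S is a set of involutions generating W and
   W is presented by <S | (st)^{m(s,t)} = 1 (m(s,t) finite)>, i.e. it has the
   universal property of this presentation. *)
Definition coxeter_system S : Prop :=
  [/\ forall s, s \in S -> s != 1%g /\ (s * s)%g = 1%g,
      forall w, exists ws, is_word S w ws &
      forall (H : groupType) (f : W -> H),
        (forall s t n, s \in S -> t \in S -> cox_order s t n ->
           ((f s * f t) ^+ n)%g = 1%g) ->
        exists g : W -> H, (forall x y, g (x * y)%g = (g x * g y)%g) /\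
                           (forall s, s \in S -> g s = f s)].

Definition weight_function (Gam : zmodType) S (phi : W -> Gam) : Prop :=
  forall w w', cox_length S (w * w')%g = (cox_length S w + cox_length S w')%N ->
    phi (w * w')%g = phi w + phi w'.

End Coxeter.

Definition tot_ord_group (Gam : zmodType) (le : rel Gam) : Prop :=
  [/\ reflexive le, antisymmetric le, transitive le, total le &
      forall x y z, le x y -> le (x + z) (y + z)].

Section Action.
Context (W : groupType) (gT : finGroupType).
Implicit Types (G K : {group gT}) (act : gT -> W -> W).

(* act realises G as a group of automorphisms of W (faithful action by
   group automorphisms), preserving S and phi. *)
Definition coxeter_aut_action (Gam : zmodType) (S : {fset W}) (phi : W -> Gam)
    G act : Prop :=
  [/\ forall w, act 1%g w = w,
      forall x y w, x \in G -> y \in G -> act (x * y)%g w = act x (act y w),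
      forall x, x \in G -> bijective (act x) /\
                {morph act x : u v / (u * v)%g},
      forall x, x \in G -> (forall w, act x w = w) -> x = 1%g &
      forall x, x \in G -> [fset act x s | s in S] = S /\
                           (forall w, phi (act x w) = phi w)].

Definition fixedW G act (w : W) : bool := [forall x in G, act x w == w].

Context (Gam : zmodType).

(* The Hecke algebra H = H(W,S,Gam,phi), as an A-module (A = Z[Gam]):
   the free A-module with basis (T_w)_{w in W}; T_w = << w >>. *)
Definition Hmod := {malg (grpring Gam)[W]}.

(* The Hecke algebra H_G = H(W^G,S_G,Gam,phi_G) as an A-module:
   free A-module with basis (T^G_w)_{w in W^G}. *)
Definition WG G act := {w : W | fixedW G act w}.
Definition HGmod G act := {malg (grpring Gam)[WG G act]}.

Definition hact act (x : gT) (h : Hmod) : Hmod :=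
  \sum_(w <- msupp h) << h@_w *g act x w >>.

Definition fixedH act (K : {set gT}) (h : Hmod) : Prop :=
  forall x, x \in K -> hact act x h = h.

Definition trace act G (K : {set gT}) (h : Hmod) : Hmod :=
  \sum_(x in transversal (lcosets K G) G) hact act x h.

(* membership in sum_{K < G} Tr_K^G(H^K) (the kernel of br_G) *)
Definition in_trsum act G (h : Hmod) : Prop :=
  exists f : {group gT} -> Hmod,
    (forall K : {group gT}, K \proper G -> fixedH act K (f K)) /\
    h = \sum_(K : {group gT} | K \proper G) trace act G K (f K).

Definition tau (h : Hmod) : grpring Gam := h@_(1%g).

Definition tauG G act (h : HGmod G act) : grpring Gam :=
  if @insub W (fixedW G act) (WG G act) 1%g is Some u then h@_u else 0.

Definition incl G act (h : HGmod G act) : Hmod :=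
  \sum_(w <- msupp h) << h@_w *g val w >>.

End Action.

(* Br_G(H) = H^G / sum_{K<G} Tr_K^G(H^K); for x, y in H^G,
   br_G(x) = br_G(y) iff x - y lies in sum_{K<G} Tr_K^G(H^K). *)
Definition br_eq (W : groupType) (gT : finGroupType) (Gam : zmodType)
    (act : gT -> W -> W) (G : {group gT}) (x y : Hmod W Gam) : Prop :=
  in_trsum act G (x - y).

(* can_G(h) = br_G(h'), where can_G is the A-linear map
   T^G_w |-> br_G(T_w), i.e. can_G(h) = br_G(incl h). *)
Definition canG_eq_brG (W : groupType) (gT : finGroupType) (Gam : zmodType)
    (act : gT -> W -> W) (G : {group gT}) (h : HGmod Gam G act)
    (h' : Hmod W Gam) : Prop :=
  br_eq act G (incl h) h'.

From HB Require Import structures.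
From mathcomp Require Import all_boot all_order all_algebra all_fingroup all_solvable.
From mathcomp Require Import finmap.
From mathcomp Require Import monalg.

(* Every automorphism in G fixes 1, so tau is G-invariant and
   tau(Tr_K^G(m)) = #|G : K| tau(m).  For a proper subgroup K of the p-group G
   this index is divisible by p, so tau vanishes mod p on the kernel of br_G.
   As can_G sends T^G_1 to br_G(T_1), tau_G(h) = tau(incl h), and
   incl h - h' lies in that kernel. *)

Import GRing.Theory.
Local Open Scope ring_scope.

Lemma lcosets_partition (gT : finGroupType) {G K : {group gT}} :
  (K \subset G)%g -> partition (lcosets K G) G.
Proof.
move=> sKG; apply/and3P; split.
- apply/eqP/setP=> y; apply/bigcupP/idP.
  + case=> B /lcosetsP [x xG ->] /lcosetP [a aK ->].
    by rewrite groupM // (subsetP sKG).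
  + move=> yG; exists (y *: K)%g; first by apply/lcosetsP; exists y.
    exact: lcoset_refl.
- apply/trivIsetP=> A B /lcosetsP [x xG ->] /lcosetsP [z zG ->] neq.
  apply/pred0P=> y /=; apply/negbTE/negP=> /andP [/lcoset_eqP yx /lcoset_eqP yz].
  by move/eqP: neq; apply; rewrite -yx -yz.
- by apply/negP=> /lcosetsP [x _ /setP/(_ x)]; rewrite lcoset_refl inE.
Qed.

Lemma card_transversal_lcosets (gT : finGroupType) (G K : {group gT}) :
  (K \subset G)%g -> #|transversal (lcosets K G) G| = #|G : K|%g.
Proof.
move=> sKG; rewrite -card_lcosets.
exact/card_transversal/transversalP/lcosets_partition.
Qed.

Lemma dvdn_indexg_pgroup {p : nat} {gT : finGroupType} {G K : {group gT}} :
  (p.-group G)%g -> (K \proper G)%g -> (p %| #|G : K|%g)%N.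
Proof.
move=> pG ltKG; have [k def_index] := p_natP (pnat_dvd (dvdn_indexg G K) pG).
have : (1 < #|G : K|%g)%N by rewrite indexg_gt1 proper_subn.
by rewrite def_index; case: k {def_index} => [|k] //= _; rewrite dvdn_exp.
Qed.

Lemma morph_mulg1 (W1 W2 : groupType) (f : W1 -> W2) :
  {morph f : u v / (u * v)%g} -> f 1%g = 1%g.
Proof. by move=> fM; apply: (@mulgI _ (f 1%g)); rewrite -fM !mulg1. Qed.

Lemma mcoeff_sumU_inj (X Y : choiceType) (R : zmodType) (f : X -> Y) :
  injective f -> forall (g : {malg R[X]}) (x : X),
  (\sum_(w <- msupp g) << g@_w *g f w >> : {malg R[Y]})@_(f x) = g@_x.
Proof.
move=> f_inj g x; rewrite raddf_sum /=.
under eq_bigr do rewrite mcoeffU (inj_eq f_inj).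
have [gx | ngx] := boolP (x \in msupp g).
  by rewrite (bigD1_seq x) //= eqxx big1 ?addr0 // => w /negbTE ->.
rewrite mcoeff_outdom // big1_seq // => w /andP [_ gw].
by case: eqP gw => [->|]; [rewrite (negbTE ngx) | ].
Qed.

Section TauAction.

Context {W : groupType} {gT : finGroupType} {Gam : zmodType}.
Context {G : {group gT}} {act : gT -> W -> W}.
Hypothesis actG_aut :
  forall x, x \in G -> bijective (act x) /\ {morph act x : u v / (u * v)%g}.

Lemma act_fixes1 {x} : x \in G -> act x 1%g = 1%g.
Proof. by move=> /actG_aut [_]; apply: morph_mulg1. Qed.

Lemma tau_hact x (m : Hmod W Gam) : x \in G -> tau (hact act x m) = tau m.
Proof.
move=> xG; have [[y actK _] _] := actG_aut x xG.
by rewrite /tau /hact -{1}(act_fixes1 xG) mcoeff_sumU_inj //; apply: can_inj actK.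
Qed.

Lemma tau_trace (K : {group gT}) (m : Hmod W Gam) :
  (K \subset G)%g -> tau (trace act G K m) = tau m *+ #|G : K|%g.
Proof.
move=> sKG; rewrite /trace /tau raddf_sum /= -card_transversal_lcosets //.
rewrite -sumr_const; apply: eq_bigr => x xX.
apply: tau_hact; move: x xX; apply/subsetP.
exact/transversal_sub/transversalP/lcosets_partition.
Qed.

Lemma tau_in_trsum {p : nat} {m : Hmod W Gam} :
  (p.-group G)%g -> in_trsum act G m -> exists a : grpring Gam, tau m = p%:R * a.
Proof.
move=> pG [f [_ ->]].
exists (\sum_(K : {group gT} | (K \proper G)%g) tau (f K) *+ (#|G : K|%g %/ p)).
rewrite /tau raddf_sum mulr_sumr; apply: eq_bigr => K ltKG.
transitivity (tau (f K) *+ #|G : K|%g); first exact: tau_trace (proper_sub ltKG).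
by rewrite mulr_natl -mulrnA divnK // (dvdn_indexg_pgroup pG).
Qed.

Lemma tauG_incl (h : HGmod Gam G act) : tauG h = tau (incl h).
Proof.
have fix1 : fixedW G act 1%g by apply/forall_inP => x /act_fixes1 ->.
rewrite /tauG; case: insubP => [u _ val_u | ]; last by rewrite fix1.
by rewrite /tau /incl -val_u mcoeff_sumU_inj //; apply: val_inj.
Qed.

End TauAction.

Theorem corollary2p6 (W : groupType) (S : {fset W}) (Gam : zmodType)
    (le : rel Gam) (phi : W -> Gam) (p : nat)
    (gT : finGroupType) (G : {group gT}) (act : gT -> W -> W)
    (h : HGmod Gam G act) (h' : Hmod W Gam) :
  coxeter_system S ->
  tot_ord_group le ->
  weight_function S phi ->
  prime p ->
  (p.-group G)%g ->
  coxeter_aut_action S phi G act ->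
  fixedH act G h' ->
  canG_eq_brG h h' ->
  exists a : grpring Gam, tauG h - tau h' = p%:R * a.
Proof.
(* Only the p-group hypothesis and the automorphism property of the action matter. *)
move=> _ _ _ _ pG [_ _ actG_aut _ _] _ can_br.
have [a tau_a] := tau_in_trsum actG_aut pG can_br.
by exists a; rewrite (tauG_incl actG_aut) -tau_a /tau raddfB.
Qed.
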